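(* A strict first-order theory $T$ is positively model-complete if and only if it is geometrically complete.
   Context: The trivial structure $\mathbf 1$ is the one-element structure with all relations full; $T$ is strict if $\mathbf 1$ embeds in no model of $T$. A homomorphism preserves atomic sentences with parameters; it is an immersion if it reflects every positive existential (prenex existential, negation-free) sentence with parameters; $T$ is positively model-complete if every homomorphism between models of $T$ is an immersion. A homomorphism $f:A\to B$ is geometrically closed if every sentence $\forall\bar y\,(\bigwedge\Phi(\bar a,\bar y)\to\psi(\bar a,\bar y))$ ($\Phi\cup\{\psi\}$ finite sets of atomic formulas, parameters from $A$) true in $A$ holds in $B$ of $f\bar a$; $T$ is geometrically complete if every homomorphism between models of $T$ is geometrically closed. *)

From mathcomp Require Import all_boot.

Set Implicit Arguments.
Unset Strict Implicit.
Unset Printing Implicit Defensive.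

Record signature := Signature {
  fsym : Type;  farity : fsym -> nat;
  rsym : Type;  rarity : rsym -> nat }.

Section Syntax.
Variable L : signature.

Inductive term : Type :=
| TVar : nat -> term
| TApp : forall f : fsym L, ('I_(farity f) -> term) -> term.

Inductive form : Type :=
| FTrue : form
| FFalse : form
| FEq : term -> term -> form
| FRel : forall r : rsym L, ('I_(rarity r) -> term) -> form
| FNot : form -> form
| FAnd : form -> form -> form
| FOr : form -> form -> form
| FImp : form -> form -> form
| FAll : nat -> form -> form
| FEx : nat -> form -> form.

Definition atomic (phi : form) : Prop :=
  match phi with FEq _ _ | FRel _ _ => True | _ => False end.

Inductive qf_positive : form -> Prop :=
| qfp_atom phi : atomic phi -> qf_positive phi
| qfp_true : qf_positive FTrue
| qfp_false : qf_positive FFalse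
| qfp_and phi psi : qf_positive phi -> qf_positive psi -> qf_positive (FAnd phi psi)
| qfp_or phi psi : qf_positive phi -> qf_positive psi -> qf_positive (FOr phi psi).

Inductive pos_exist : form -> Prop :=
| pe_qf phi : qf_positive phi -> pos_exist phi
| pe_ex x phi : pos_exist phi -> pos_exist (FEx x phi).

Fixpoint in_list (phi : form) (Phi : seq form) : Prop :=
  match Phi with [::] => False | p :: Ps => p = phi \/ in_list phi Ps end.

Definition big_and (Phi : seq form) : form := foldr FAnd FTrue Phi.

Definition geom_form (ys : seq nat) (Phi : seq form) (psi : form) : form :=
  foldr FAll (FImp (big_and Phi) psi) ys.

End Syntax.

Arguments FTrue {L}.
Arguments FFalse {L}.

Record structure (L : signature) := Structure {
  carrier :> Type;
  finterp : forall f : fsym L, ('I_(farity f) -> carrier) -> carrier;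
  rinterp : forall r : rsym L, ('I_(rarity r) -> carrier) -> Prop }.

Section Semantics.
Variables (L : signature) (M : structure L).

Fixpoint eval (e : nat -> M) (t : term L) : M :=
  match t with
  | TVar n => e n
  | TApp f ts => @finterp L M f (fun i => eval e (ts i))
  end.

Definition upd (e : nat -> M) (x : nat) (a : M) : nat -> M :=
  fun n => if n == x then a else e n.

Fixpoint sat (e : nat -> M) (phi : form L) : Prop :=
  match phi with
  | FTrue => True
  | FFalse => False
  | FEq t u => eval e t = eval e u
  | FRel r ts => @rinterp L M r (fun i => eval e (ts i))
  | FNot p => ~ sat e p
  | FAnd p q => sat e p /\ sat e q
  | FOr p q => sat e p \/ sat e q
  | FImp p q => sat e p -> sat e q
  | FAll x p => forall a : M, sat (upd e x a) p
  | FEx x p => exists a : M, sat (upd e x a) p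
  end.

End Semantics.

Arguments eval {L} M e t.
Arguments sat {L} M e phi.

Definition theory (L : signature) := form L -> Prop.

Definition is_model (L : signature) (T : theory L) (M : structure L) : Prop :=
  inhabited M /\ forall phi, T phi -> forall e : nat -> M, sat M e phi.

Definition trivial_structure (L : signature) : structure L :=
  @Structure L unit (fun _ _ => tt) (fun _ _ => True).

Section Maps.
Variables (L : signature) (A B : structure L).

Definition homomorphism (h : A -> B) : Prop :=
  forall phi : form L, atomic phi ->
  forall e : nat -> A, sat A e phi -> sat B (h \o e) phi.

Definition embedding (h : A -> B) : Prop :=
  injective h /\
  forall phi : form L, atomic phi ->
  forall e : nat -> A, sat A e phi <-> sat B (h \o e) phi.

Definition immersion (h : A -> B) : Prop :=
  homomorphism h /\
  forall phi : form L, pos_exist phi ->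
  forall e : nat -> A, sat B (h \o e) phi -> sat A e phi.

Definition geom_closed (h : A -> B) : Prop :=
  homomorphism h /\
  forall (ys : seq nat) (Phi : seq (form L)) (psi : form L),
    (forall phi, in_list phi Phi -> atomic phi) -> atomic psi ->
    forall e : nat -> A,
      sat A e (geom_form ys Phi psi) -> sat B (h \o e) (geom_form ys Phi psi).

End Maps.

Definition strict (L : signature) (T : theory L) : Prop :=
  forall M : structure L, is_model T M ->
  forall h : trivial_structure L -> M, ~ embedding h.

Definition pos_model_complete (L : signature) (T : theory L) : Prop :=
  forall (A B : structure L), is_model T A -> is_model T B ->
  forall h : A -> B, homomorphism h -> immersion h.

Definition geom_complete (L : signature) (T : theory L) : Prop :=
  forall (A B : structure L), is_model T A -> is_model T B ->
  forall h : A -> B, homomorphism h -> geom_closed h.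

(* If h : A -> B fails to reflect some positive existential formula
   exists xs, /\ Phi, then every sentence forall xs, /\ Phi -> psi with psi
   atomic holds vacuously in A.  When h is geometrically closed these sentences
   transfer to B, so a tuple realising Phi in B satisfies every atom; its first
   entry spans a copy of the trivial structure 1, which strictness rules out.

   Conversely let h : A -> B be a homomorphism of models of a positively
   model-complete theory, forall ys, /\ Phi -> psi true in A, and a tuple g
   realising Phi in B over parameters from h(A).  Since h is an immersion, each
   finite piece of the positive diagram of B, together with Phi(g) and the
   parameters, pulls back to A along some map w : B -> A, and then psi(w g)
   holds in A.  An ultraproduct of these maps, over an ultrafilter on the finite
   pieces of the diagram, is a homomorphism k from B into an ultrapower C of A
   (a model of T by Los's theorem) with psi(k g) true in C; the immersion k
   reflects psi back to B. *)

From mathcomp Require Import all_boot.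
From Stdlib Require Import Classical ClassicalEpsilon.
From Stdlib Require Import FunctionalExtensionality PropExtensionality ProofIrrelevance.
From Stdlib Require List.
From mathcomp Require classical_sets filter.

Set Implicit Arguments.
Unset Strict Implicit.
Unset Printing Implicit Defensive.

(** * Variable bounds, renaming and iterated quantifiers *)

Lemma leq_foldr_maxn (x : nat) (s : seq nat) : List.In x s -> x <= foldr maxn 0 s.
Proof.
elim: s => //= y s IH [->|/IH le_xs]; first exact: leq_maxl.
exact: leq_trans le_xs (leq_maxr _ _).
Qed.

Lemma InP (T : eqType) (x : T) (s : seq T) : reflect (List.In x s) (x \in s).
Proof.
apply: (iffP idP); elim: s => //= y s IH; rewrite in_cons.
  by case/orP=> [/eqP ->|/IH]; auto.
by case=> [->|/IH ->]; rewrite ?eqxx ?orbT.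
Qed.

Lemma In_enum_ord n (j : 'I_n) : List.In j (enum 'I_n).
Proof. by apply/InP; rewrite mem_enum. Qed.

Lemma leq_foldr_maxn_ord n (F : 'I_n -> nat) j :
  F j <= foldr maxn 0 (List.map F (enum 'I_n)).
Proof. exact/leq_foldr_maxn/List.in_map/In_enum_ord. Qed.

Section Syntax.
Variable L : signature.
Implicit Types (t : term L) (phi psi : form L) (Phi : seq (form L)).

Fixpoint term_vbound t : nat :=
  match t with
  | TVar n => n
  | TApp f ts => foldr maxn 0 (List.map (fun i => term_vbound (ts i)) (enum 'I_(farity f)))
  end.

Definition atom_vbound phi : nat :=
  match phi with
  | FEq t u => maxn (term_vbound t) (term_vbound u)
  | FRel r ts => foldr maxn 0 (List.map (fun i => term_vbound (ts i)) (enum 'I_(rarity r)))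
  | _ => 0
  end.

Definition atoms_vbound Phi : nat := foldr maxn 0 (List.map atom_vbound Phi).

Lemma leq_atom_atoms_vbound phi Phi :
  List.In phi Phi -> atom_vbound phi <= atoms_vbound Phi.
Proof. by move=> Phi_phi; apply/leq_foldr_maxn/List.in_map. Qed.

Lemma eval_eq_on (M : structure L) (g1 g2 : nat -> M) t :
  (forall n, n <= term_vbound t -> g1 n = g2 n) -> eval M g1 t = eval M g2 t.
Proof.
elim: t => [n|f ts IH] /= eq_g; first exact: eq_g.
congr finterp; apply: functional_extensionality => j; apply: IH => n le_n.
by apply: eq_g; apply: leq_trans le_n (leq_foldr_maxn_ord (fun i => term_vbound (ts i)) j).
Qed.

Lemma sat_atomic_eq_on (M : structure L) (g1 g2 : nat -> M) phi :
  atomic phi -> (forall n, n <= atom_vbound phi -> g1 n = g2 n) ->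
  sat M g1 phi <-> sat M g2 phi.
Proof.
case: phi => //= [t u|r ts] _ eq_g.
  rewrite (@eval_eq_on _ g1 g2 t) ?(@eval_eq_on _ g1 g2 u) // => n le_n; apply: eq_g;
    [exact: leq_trans le_n (leq_maxr _ _) | exact: leq_trans le_n (leq_maxl _ _)].
suff -> : (fun i => eval M g1 (ts i)) = (fun i => eval M g2 (ts i)) by [].
apply: functional_extensionality => j; apply: eval_eq_on => n le_n; apply: eq_g.
exact: leq_trans le_n (leq_foldr_maxn_ord (fun i => term_vbound (ts i)) j).
Qed.

Fixpoint term_rename (rho : nat -> nat) t : term L :=
  match t with
  | TVar n => TVar L (rho n)
  | TApp f ts => TApp (fun i => term_rename rho (ts i))
  end.

Definition atom_rename (rho : nat -> nat) phi : form L :=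
  match phi with
  | FEq t u => FEq (term_rename rho t) (term_rename rho u)
  | FRel r ts => FRel (fun i => term_rename rho (ts i))
  | _ => phi
  end.

Lemma atomic_rename rho phi : atomic phi -> atomic (atom_rename rho phi).
Proof. by case: phi. Qed.

Lemma eval_rename (M : structure L) (g : nat -> M) rho t :
  eval M g (term_rename rho t) = eval M (g \o rho) t.
Proof.
elim: t => [n|f ts IH] //=.
by congr finterp; apply: functional_extensionality => j; apply: IH.
Qed.

Lemma sat_rename (M : structure L) (g : nat -> M) rho phi : atomic phi ->
  sat M g (atom_rename rho phi) <-> sat M (g \o rho) phi.
Proof.
case: phi => //= [t u|r ts] _; first by rewrite !eval_rename.
suff -> : (fun i => eval M g (term_rename rho (ts i))) =
          (fun i => eval M (g \o rho) (ts i)) by [].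
by apply: functional_extensionality => j; apply: eval_rename.
Qed.

Lemma in_listP phi Phi : in_list phi Phi <-> List.In phi Phi.
Proof. by elim: Phi => //= psi Phi ->. Qed.

Lemma sat_big_and (M : structure L) (g : nat -> M) Phi :
  sat M g (big_and Phi) <-> forall phi, List.In phi Phi -> sat M g phi.
Proof.
elim: Phi => [|psi Phi IH] /=; first by [].
rewrite IH; split=> [[sat_psi sat_Phi] phi [<-|/sat_Phi]|sat_all] //.
by split=> [|phi Phi_phi]; apply: sat_all; [left|right].
Qed.

Definition agree_off (M : Type) (xs : seq nat) (g g' : nat -> M) :=
  forall n, n \notin xs -> g' n = g n.

Lemma agree_off_cons (M : structure L) x xs (g g' : nat -> M) :
  agree_off (x :: xs) g g' <-> exists a, agree_off xs (upd g x a) g'.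
Proof.
rewrite /agree_off /upd; split=> [agree_g|[a agree_g] n].
  exists (g' x) => n; case: eqP => [-> //|/eqP ne_nx nxs].
  by apply: agree_g; rewrite inE negb_or ne_nx.
by rewrite inE negb_or => /andP [/negPf ne_nx nxs]; rewrite agree_g // ne_nx.
Qed.

Lemma agree_off_nil (M : Type) (g g' : nat -> M) : agree_off [::] g g' <-> g' = g.
Proof. by split=> [agree_g|-> //]; apply: functional_extensionality => n; apply: agree_g. Qed.

Lemma fresh_names (M : Type) (S : seq M) (m : nat) (g : nat -> M) :
  exists (var : M -> nat) (G : nat -> M),
    agree_off (iota m (size S)) g G /\ forall b, List.In b S -> G (var b) = b.
Proof.
have In_nth b : List.In b S -> exists j, j < size S /\ nth b S j = b.
  elim: S => //= a S IH [->|/IH [j S_j]]; first by exists 0.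
  by exists j.+1.
pose pos b := epsilon (inhabits 0) (fun j => j < size S /\ nth b S j = b).
(* The variable m + j names the j-th entry of S. *)
exists (fun b => m + pos b), (fun n => if n < m then g n else nth (g n) S (n - m)); split.
  move=> n; rewrite mem_iota negb_and -leqNgt -ltnNge.
  by case: ltnP => // le_mn /= le_n; rewrite nth_default // leq_subRL.
move=> b /In_nth S_b; have [lt_pos pos_b] := epsilon_spec (inhabits 0) _ S_b.
by rewrite ltnNge leq_addr /= addKn -[RHS]pos_b; apply: set_nth_default.
Qed.

Lemma sat_foldr_FAll (M : structure L) xs p (g : nat -> M) :
  sat M g (foldr (@FAll L) p xs) <-> forall g', agree_off xs g g' -> sat M g' p.
Proof.
elim: xs g => [|x xs IH] g /=.
  by split=> [sat_p g' /agree_off_nil ->|]; last by apply; apply/agree_off_nil.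
split=> [sat_all g' /agree_off_cons [a agree_g]|sat_all a].
  exact: (proj1 (IH _) (sat_all a)).
by apply/IH => g' agree_g; apply: sat_all; apply/agree_off_cons; exists a.
Qed.

Lemma sat_foldr_FEx (M : structure L) xs p (g : nat -> M) :
  sat M g (foldr (@FEx L) p xs) <-> exists2 g', agree_off xs g g' & sat M g' p.
Proof.
elim: xs g => [|x xs IH] g /=.
  by split=> [sat_p|[g' /agree_off_nil -> //]]; exists g.
split=> [[a /IH [g' agree_g sat_p]]|[g' /agree_off_cons [a agree_g] sat_p]].
  by exists g' => //; apply/agree_off_cons; exists a.
by exists a; apply/IH; exists g'.
Qed.

Lemma pos_existP phi :
  pos_exist phi -> exists xs p, qf_positive p /\ phi = foldr (@FEx L) p xs.
Proof.
elim=> [p qf_p|x p _ [xs [q [qf_q ->]]]]; first by exists [::], p.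
by exists (x :: xs), q.
Qed.

Lemma pos_exist_foldr_FEx xs Phi :
  (forall phi, List.In phi Phi -> atomic phi) ->
  pos_exist (foldr (@FEx L) (big_and Phi) xs).
Proof.
move=> atomic_Phi; elim: xs => [|x xs IH] /=; last exact: pe_ex.
apply: pe_qf; elim: Phi atomic_Phi => [|psi Phi IH'] atomic_Phi /=; first exact: qfp_true.
apply: qfp_and; first by apply/qfp_atom/atomic_Phi; left.
by apply: IH' => phi Phi_phi; apply: atomic_Phi; right.
Qed.

Lemma qf_positive_disjunct (M : structure L) (g : nat -> M) p :
  qf_positive p -> sat M g p ->
  exists Phi, [/\ forall phi, List.In phi Phi -> atomic phi,
    forall phi, List.In phi Phi -> sat M g phi &
    forall (M' : structure L) (g' : nat -> M'),
      (forall phi, List.In phi Phi -> sat M' g' phi) -> sat M' g' p].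
Proof.
elim=> [phi atomic_phi sat_phi|||p1 p2 _ IH1 _ IH2|p1 p2 _ IH1 _ IH2] //.
- by exists [:: phi]; split=> [q [<-|]|q [<-|]|M' g' /(_ phi (or_introl erefl))].
- by exists [::].
- case=> /IH1 [P1 [at1 sat1 imp1]] /IH2 [P2 [at2 sat2 imp2]].
  exists (List.app P1 P2); split=> [q|q|M' g' sat_P]; rewrite ?List.in_app_iff.
  + by case=> [/at1|/at2].
  + by case=> [/sat1|/sat2].
  by split; [apply: imp1|apply: imp2] => q Pq; apply: sat_P; apply/List.in_app_iff; auto.
- case=> [/IH1|/IH2] [P [atP satP impP]]; exists P; split=> // M' g' /impP; by [left|right].
Qed.

End Syntax.

(** * Geometric completeness implies positive model-completeness *)

Lemma atoms_trivial_embedding (L : signature) (B : structure L) (g : nat -> B) :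
  (forall phi, atomic phi -> sat B g phi) ->
  embedding (fun _ : trivial_structure L => g 0).
Proof.
move=> sat_atoms; set b := g 0.
have fix_b f : finterp (fun _ : 'I_(farity f) => b) = b.
  exact: (sat_atoms (FEq (TApp (fun _ => TVar L 0)) (TVar L 0)) I).
have eval_b t : eval B (fun _ => b) t = b.
  elim: t => [n|f ts IH] //=; rewrite -[RHS](fix_b f).
  by congr finterp; apply: functional_extensionality.
split=> [[] [] //|].
case=> //= [t u|r ts] _ e.
  by rewrite !eval_b; split=> // _; do 2 case: (eval (trivial_structure L) e _).
suff -> : (fun i => eval B ((fun=> b) \o e) (ts i)) = (fun=> b).
  by split=> // _; apply: (sat_atoms (FRel (fun _ => TVar L 0)) I).
by apply: functional_extensionality => i; apply: eval_b.
Qed.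

Lemma geom_complete_pos_model_complete (L : signature) (T : theory L) :
  strict T -> geom_complete T -> pos_model_complete T.
Proof.
move=> strict_T geom_T A B mA mB h hom_h.
split=> // _ /pos_existP [xs [p [qf_p ->]]] e.
move=> /sat_foldr_FEx [g agree_g sat_p]; apply: NNPP => unsat_A.
have [Phi [atomic_Phi sat_Phi Phi_p]] := qf_positive_disjunct qf_p sat_p.
have sat_atoms psi : atomic psi -> sat B g psi.
  move=> atomic_psi; have [_ closed_h] := geom_T A B mA mB h hom_h.
  have /sat_foldr_FAll sat_B : sat B (h \o e) (geom_form xs Phi psi).
    apply: (closed_h _ _ _ _ atomic_psi) => [phi /in_listP /atomic_Phi //|].
    apply/sat_foldr_FAll => g0 agree_g0 /sat_big_and sat_Phi0; case: unsat_A.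
    by apply/sat_foldr_FEx; exists g0; last exact: Phi_p sat_Phi0.
  exact/(sat_B g agree_g)/sat_big_and/sat_Phi.
exact: strict_T mB _ (atoms_trivial_embedding sat_atoms).
Qed.

(** * Ultrapowers and Los's theorem *)

Lemma ultrafilter_of_directed (I J : Type) (D : J -> I -> Prop) (j0 : J) :
  (forall j, exists i, D j i) ->
  (forall j1 j2, exists j, forall i, D j i -> D j1 i /\ D j2 i) ->
  exists U : (I -> Prop) -> Prop, filter.UltraFilter U /\ forall j, U (D j).
Proof.
move=> D_nonempty D_directed.
have D_filter : filter.ProperFilter (filter.filter_from classical_sets.setT D).
  apply: filter.filter_from_proper => [|j _]; last by have [i] := D_nonempty j; exists i.
  apply: filter.filter_from_filter; first by exists j0.
  by move=> j1 j2 _ _; have [j Dj] := D_directed j1 j2; exists j => // i /Dj.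
have [U [ultra_U sub_U]] := filter.ultraFilterLemma D_filter.
by exists U; split=> // j; apply: sub_U; exists j.
Qed.

Section Ultrafilter.
Variables (I : Type) (U : (I -> Prop) -> Prop).
Context {ultra_U : filter.UltraFilter U}.
Implicit Types X Y : I -> Prop.

Lemma ultra_and X Y : U (fun i => X i /\ Y i) <-> U X /\ U Y.
Proof.
split=> [UXY|[UX UY]]; last exact: filter.filterI.
by split; apply: filter.filterS UXY => i [].
Qed.

Lemma ultra_not X : U (fun i => ~ X i) <-> ~ U X.
Proof.
split=> [UnX UX|nUX]; last by case: (filter.in_ultra_setVsetC X ultra_U).
by apply: (@filter.filter_not_empty _ U); apply: filter.filterS2 UX UnX => i.
Qed.

Lemma ultra_or X Y : U (fun i => X i \/ Y i) <-> U X \/ U Y.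
Proof.
split=> [UXY|[UX|UY]]; last 2 first.
- by apply: filter.filterS UX => i; left.
- by apply: filter.filterS UY => i; right.
apply: NNPP => /not_or_and [/ultra_not UnX /ultra_not UnY].
apply: (@filter.filter_not_empty _ U).
by apply: filter.filterS2 UXY (filter.filterI UnX UnY) => i [] ? [].
Qed.

Lemma ultra_imp X Y : U (fun i => X i -> Y i) <-> (U X -> U Y).
Proof.
split=> [UXY UX|UXY]; first by apply: filter.filterS2 UXY UX => i XY /XY.
have [UX|/ultra_not UnX] := classic (U X); first by apply: filter.filterS (UXY UX) => i.
by apply: filter.filterS UnX => i.
Qed.

Lemma ultra_forall_ord n (P : 'I_n -> I -> Prop) :
  (forall j, U (P j)) -> U (fun i => forall j, P j i).
Proof. exact: filter.filter_forall. Qed.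

Lemma ultra_exists (A : Type) (a0 : I -> A) (P : I -> A -> Prop) :
  U (fun i => exists a, P i a) <-> exists x : I -> A, U (fun i => P i (x i)).
Proof.
split=> [UP|[x]]; last by apply: filter.filterS => i; exists (x i).
exists (fun i => epsilon (inhabits (a0 i)) (P i)); apply: filter.filterS UP => i.
exact: epsilon_spec.
Qed.

Lemma ultra_forall (A : Type) (a0 : I -> A) (P : I -> A -> Prop) :
  U (fun i => forall a, P i a) <-> forall x : I -> A, U (fun i => P i (x i)).
Proof.
split=> [UP x|UP]; first by apply: filter.filterS UP.
apply: NNPP => /ultra_not nUP.
have /(ultra_exists a0) [x /ultra_not nUx] : U (fun i => exists a, ~ P i a).
  by apply: filter.filterS nUP => i /not_all_ex_not.
exact: nUx (UP x).
Qed.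

End Ultrafilter.

Section Ultrapower.
Variables (L : signature) (A : structure L) (I : Type) (U : (I -> Prop) -> Prop).
Context {ultra_U : filter.UltraFilter U}.
Implicit Types x y : I -> A.

Definition ueq x y := U (fun i => x i = y i).

Lemma ueq_refl x : ueq x x.
Proof. by apply: filter.filterE. Qed.

Lemma ueq_trans x y z : ueq x y -> ueq y z -> ueq x z.
Proof. by move=> Uxy Uyz; apply: filter.filterS2 Uxy Uyz => i ->. Qed.

Lemma ueq_sym x y : ueq x y -> ueq y x.
Proof. by apply: filter.filterS => i. Qed.

(* The ultrapower is the quotient of I -> A by ueq, realised as the set of
   fixed points of a choice of representatives. *)
Definition urep x : I -> A := epsilon (inhabits x) (ueq^~ x).

Lemma urep_ueq x : ueq (urep x) x.
Proof. by apply: (epsilon_spec (inhabits x) (ueq^~ x)); exists x; apply: ueq_refl. Qed.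

Lemma urep_eq x y : ueq x y -> urep x = urep y.
Proof.
move=> Uxy; rewrite /urep (proof_irrelevance _ (inhabits x) (inhabits y)); congr epsilon.
apply: functional_extensionality => z; apply: propositional_extensionality.
by split=> Uz; [apply: ueq_trans Uz Uxy | apply: ueq_trans Uz (ueq_sym Uxy)].
Qed.

Lemma urep_idem x : urep (urep x) = urep x.
Proof. exact/urep_eq/urep_ueq. Qed.

Definition uclass := {x : I -> A | urep x = x}.

Definition uclass_of x : uclass := exist _ (urep x) (urep_idem x).

Lemma uclass_eq (c1 c2 : uclass) : ueq (sval c1) (sval c2) -> c1 = c2.
Proof.
case: c1 c2 => [x1 rep_x1] [x2 rep_x2] /= /urep_eq; rewrite rep_x1 rep_x2 => eq_x.
by subst x2; congr exist; apply: proof_irrelevance.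
Qed.

Definition ultrapower : structure L :=
  @Structure L uclass
    (fun f cs => uclass_of (fun i => finterp (fun j => sval (cs j) i)))
    (fun r cs => U (fun i => rinterp (fun j => sval (cs j) i))).

Lemma eval_ultrapower (g : nat -> ultrapower) (s : nat -> I -> A) t :
  (forall n, ueq (sval (g n)) (s n)) ->
  ueq (sval (eval ultrapower g t)) (fun i => eval A (s^~ i) t).
Proof.
move=> g_s; elim: t => [n|f ts IH] //=.
apply: ueq_trans (urep_ueq _) _; apply: filter.filterS (ultra_forall_ord IH) => i eq_ts /=.
by congr finterp; apply: functional_extensionality.
Qed.

Lemma sat_ultrapower_atomic (g : nat -> ultrapower) (s : nat -> I -> A) phi :
  atomic phi -> (forall n, ueq (sval (g n)) (s n)) ->
  sat ultrapower g phi <-> U (fun i => sat A (s^~ i) phi).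
Proof.
case: phi => //= [t u|r ts] _ g_s.
  have Ut : U _ := eval_ultrapower t g_s; have Uu : U _ := eval_ultrapower u g_s.
  split=> [eq_tu|Utu]; first by rewrite eq_tu in Ut; apply: filter.filterS2 Ut Uu => i <-.
  by apply: uclass_eq; rewrite /ueq; apply: filter.filterS3 Ut Uu Utu => i -> ->.
have Uts : U (fun i => (fun j => sval (eval ultrapower g (ts j)) i) =
                       (fun j => eval A (s^~ i) (ts j))).
  apply: filter.filterS (ultra_forall_ord (fun j => eval_ultrapower (ts j) g_s)) => i eq_i.
  exact: functional_extensionality.
by split=> Urel; apply: filter.filterS2 Urel Uts => i rel_i eq_i; rewrite ?eq_i // -eq_i.
Qed.

Definition ucoord (g : nat -> ultrapower) (i : I) : nat -> A := fun n => sval (g n) i.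

Lemma ucoord_upd (g : nat -> ultrapower) (v : nat) c i :
  ucoord (upd g v c) i = upd (ucoord g i) v (sval c i).
Proof. by apply: functional_extensionality => n; rewrite /ucoord /upd; case: eqP. Qed.

Lemma ucoord_upd_uclass_of (g : nat -> ultrapower) (v : nat) y p :
  U (fun i => sat A (ucoord (upd g v (uclass_of y)) i) p) <->
  U (fun i => sat A (upd (ucoord g i) v (y i)) p).
Proof.
have Uy : U _ := urep_ueq y.
split=> Up; apply: filter.filterS2 Up Uy => i; rewrite ucoord_upd /uclass_of /=.
  by move=> ? <-.
by move=> ? ->.
Qed.

Theorem sat_ultrapower phi (g : nat -> ultrapower) :
  sat ultrapower g phi <-> U (fun i => sat A (ucoord g i) phi).
Proof.
elim: phi g => [||t u|r ts|p IH|p IHp q IHq|p IHp q IHq|p IHp q IHq|v p IH|v p IH] g.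
- by split=> // _; apply: filter.filterT.
- by split=> //; apply: filter.filter_not_empty.
- exact: (@sat_ultrapower_atomic g (sval \o g) (FEq t u) Logic.I (fun n => ueq_refl _)).
- exact: (@sat_ultrapower_atomic g (sval \o g) (FRel ts) Logic.I (fun n => ueq_refl _)).
- by rewrite /= ultra_not IH.
- by rewrite /= ultra_and IHp IHq.
- by rewrite /= ultra_or IHp IHq.
- by rewrite /= ultra_imp IHp IHq.
- rewrite /= (ultra_forall (sval (g 0))); split=> [sat_all y|Uall c].
    exact/ucoord_upd_uclass_of/IH.
  by apply/IH; apply: filter.filterS (Uall (sval c)) => i; rewrite ucoord_upd.
- rewrite /= (ultra_exists (sval (g 0))).
  split=> [[c /IH Uc]|[y /ucoord_upd_uclass_of /IH sat_y]].
    by exists (sval c); apply: filter.filterS Uc => i; rewrite ucoord_upd.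
  by exists (uclass_of y).
Qed.

Lemma ultrapower_model (T : theory L) : is_model T A -> is_model T ultrapower.
Proof.
move=> [[a] sat_T]; split=> [|phi T_phi g]; first exact: inhabits (uclass_of (fun=> a)).
by apply/sat_ultrapower; apply: filter.filterE => i; apply: sat_T.
Qed.

End Ultrapower.

Arguments ultrapower {L} A {I} U {ultra_U}.
Arguments uclass_of {L A I} U {ultra_U} x.

(** * Positive model-completeness implies geometric completeness *)

(* A finite piece of the positive diagram of M. *)
Record fact (L : signature) (M : structure L) := Fact {
  fact_atoms : seq (form L);
  fact_val : nat -> M;
  fact_atomic : forall phi, List.In phi fact_atoms -> atomic phi;
  fact_sat : forall phi, List.In phi fact_atoms -> sat M fact_val phi }.

Definition respects (L : signature) (A B : structure L) (w : B -> A) (x : fact B) :=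
  forall phi, List.In phi (fact_atoms x) -> sat A (w \o fact_val x) phi.

Section Pullback.
Variables (L : signature) (A B : structure L) (h : A -> B).
Hypothesis immersion_h : immersion h.

Lemma immersion_reflect_atoms xs (Delta : seq (form L)) (e : nat -> A) (g : nat -> B) :
  (forall phi, List.In phi Delta -> atomic phi) ->
  agree_off xs (h \o e) g -> (forall phi, List.In phi Delta -> sat B g phi) ->
  exists2 g0, agree_off xs e g0 & forall phi, List.In phi Delta -> sat A g0 phi.
Proof.
move=> atomic_Delta agree_g /sat_big_and sat_Delta.
have sat_B : sat B (h \o e) (foldr (@FEx L) (big_and Delta) xs).
  by apply/sat_foldr_FEx; exists g.
have [_ reflect_h] := immersion_h.
have /sat_foldr_FEx [g0 agree_g0 /sat_big_and] :=
  reflect_h _ (pos_exist_foldr_FEx xs atomic_Delta) e sat_B.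
by exists g0.
Qed.

Definition fact_elems (x : fact B) : seq B :=
  List.map (fact_val x) (iota 0 (atoms_vbound (fact_atoms x)).+1).

Lemma immersion_pullback (F : seq (fact B)) (e : nat -> A) (m : nat) :
  exists w : B -> A, (forall x, List.In x F -> respects w x) /\
                     forall n, n < m -> w (h (e n)) = e n.
Proof.
pose S := List.app (List.map (h \o e) (iota 0 m)) (List.flat_map fact_elems F).
have [var [GB [agree_GB GB_var]]] := fresh_names S m (h \o e).
have param n : n < m -> n \notin iota m (size S) by move=> lt_n; rewrite mem_iota leqNgt lt_n.
(* Name the elements of S by fresh variables: [links] ties the names of the
   h (e n) to the parameters n < m and [renamed] restates the facts of F about
   the named elements; reflect this positive existential formula along h. *)
pose links := List.map (fun n => FEq (TVar L (var (h (e n)))) (TVar L n)) (iota 0 m).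
pose renamed := List.flat_map
  (fun x => List.map (atom_rename (var \o fact_val x)) (fact_atoms x)) F.
have [GA agree_GA sat_GA] : exists2 GA, agree_off (iota m (size S)) e GA &
    forall phi, List.In phi (List.app links renamed) -> sat A GA phi.
  apply: (immersion_reflect_atoms (g := GB)) => // [phi|phi].
    case/List.in_app_iff=> [/List.in_map_iff [n [<- _]] //|].
    by case/List.in_flat_map=> x [_ /List.in_map_iff [psi [<- /fact_atomic /atomic_rename]]].
  case/List.in_app_iff=> [/List.in_map_iff [n [<- /InP]]|].
    rewrite mem_iota add0n => /andP [_ lt_n] /=; rewrite GB_var ?agree_GB ?param //.
    by rewrite /S List.in_app_iff; left; apply/List.in_map/InP; rewrite mem_iota.
  case/List.in_flat_map=> x [Fx /List.in_map_iff [psi [<- x_psi]]].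
  apply/sat_rename; first exact: fact_atomic x_psi.
  apply/(sat_atomic_eq_on (g2 := fact_val x) (fact_atomic x_psi)); last exact: fact_sat.
  move=> n le_n /=; apply: GB_var; rewrite /S List.in_app_iff; right.
  apply/List.in_flat_map; exists x; split=> //; apply/List.in_map/InP; rewrite mem_iota ltnS.
  exact: leq_trans le_n (leq_atom_atoms_vbound x_psi).
exists (GA \o var); split=> [x Fx phi x_phi|n lt_n].
  apply/sat_rename; first exact: fact_atomic x_phi.
  apply: sat_GA; apply/List.in_app_iff; right.
  by apply/List.in_flat_map; exists x; split=> //; apply/List.in_map.
rewrite -[RHS](agree_GA n (param n lt_n)).
apply: (sat_GA (FEq (TVar L (var (h (e n)))) (TVar L n))).
by apply/List.in_app_iff; left; apply/List.in_map/InP; rewrite mem_iota.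
Qed.

End Pullback.

Lemma immersion_geom_pullback (L : signature) (A B : structure L) (h : A -> B)
    ys (Phi : seq (form L)) psi (e : nat -> A) (g : nat -> B) :
  immersion h -> (forall phi, List.In phi Phi -> atomic phi) -> atomic psi ->
  sat A e (geom_form ys Phi psi) -> agree_off ys (h \o e) g ->
  (forall phi, List.In phi Phi -> sat B g phi) ->
  forall F : seq (fact B), exists w : B -> A,
    (forall x, List.In x F -> respects w x) /\ sat A (w \o g) psi.
Proof.
move=> immersion_h atomic_Phi atomic_psi /sat_foldr_FAll sat_geom agree_g sat_Phi F.
pose N := maxn (atoms_vbound Phi) (atom_vbound psi).
have [w [respects_w w_e]] :=
  immersion_pullback immersion_h (Fact atomic_Phi sat_Phi :: F) e N.+1.
exists w; split=> [x Fx|]; first by apply: respects_w; right.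
pose g' n := if n \in ys then w (g n) else e n.
have g'_g n : n <= N -> g' n = w (g n).
  by rewrite /g'; case: ifP => // /negbT ys_n le_n; rewrite agree_g //= w_e.
apply/(sat_atomic_eq_on (g2 := g') atomic_psi) => [n le_n|].
  by rewrite g'_g // (leq_trans le_n) ?leq_maxr.
apply: sat_geom => [n /negPf ys_n|]; first by rewrite /g' ys_n.
apply/sat_big_and => phi Phi_phi.
apply/(sat_atomic_eq_on (g2 := w \o g) (atomic_Phi _ Phi_phi)).
  move=> n le_n; apply: g'_g; apply: leq_trans le_n _.
  exact: leq_trans (leq_atom_atoms_vbound Phi_phi) (leq_maxl _ _).
by apply: (respects_w _ (or_introl erefl)).
Qed.

Lemma ultralimit_hom (L : signature) (T : theory L) (A B : structure L)
    (W : seq (fact B) -> B -> A) :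
  is_model T A -> (forall F x, List.In x F -> respects (W F) x) ->
  exists (C : structure L) (k : B -> C), [/\ is_model T C, homomorphism k &
    forall psi (s : nat -> B), atomic psi ->
      (forall F, sat A (W F \o s) psi) -> sat C (k \o s) psi].
Proof.
move=> model_A respects_W.
pose D (F F' : seq (fact B)) := forall x, List.In x F -> List.In x F'.
have [U [ultra_U U_D]] : exists U, filter.UltraFilter U /\ forall F, U (D F).
  apply: (ultrafilter_of_directed [::]) => [F|F1 F2]; first by exists F.
  by exists (List.app F1 F2) => F' D_F'; split=> x Fx; apply: D_F'; apply/List.in_app_iff; auto.
pose C := ultrapower (ultra_U := ultra_U) A U.
pose k (b : B) : C := uclass_of (ultra_U := ultra_U) U (fun F => W F b).
have transfer psi s F0 : atomic psi -> (forall F, D F0 F -> sat A (W F \o s) psi) ->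
    sat C (k \o s) psi.
  move=> atomic_psi sat_W.
  apply/(sat_ultrapower_atomic (s := fun n F => W F (s n)) atomic_psi) => [n|].
    exact: urep_ueq.
  exact: filter.filterS (U_D F0).
exists C, k; split=> [|phi atomic_phi s sat_phi|psi s atomic_psi sat_W].
- exact: ultrapower_model.
- have atomic1 q : List.In q [:: phi] -> atomic q by case=> [<-|].
  have sat1 q : List.In q [:: phi] -> sat B s q by case=> [<-|].
  apply: (transfer _ _ [:: Fact atomic1 sat1]) => // F D_F.
  by apply: respects_W (D_F _ (or_introl erefl)) _ (or_introl erefl).
- exact: (transfer _ _ [::]).
Qed.

Lemma pos_model_complete_geom_complete (L : signature) (T : theory L) :
  pos_model_complete T -> geom_complete T.
Proof.
move=> pmc_T A B model_A model_B h hom_h.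
split=> // ys Phi psi atomic_Phi atomic_psi e sat_A.
have {}atomic_Phi phi : List.In phi Phi -> atomic phi by move/in_listP/atomic_Phi.
apply/sat_foldr_FAll => g agree_g /sat_big_and sat_Phi.
have pullback := immersion_geom_pullback (pmc_T _ _ model_A model_B _ hom_h)
  atomic_Phi atomic_psi sat_A agree_g sat_Phi.
have [W W_spec] := ClassicalEpsilon.choice _ pullback.
have [C [k [model_C hom_k k_psi]]] :=
  ultralimit_hom model_A (fun F x => proj1 (W_spec F) x).
apply: (proj2 (pmc_T _ _ model_B model_C _ hom_k) _ (pe_qf (qfp_atom atomic_psi))).
by apply: k_psi => // F; case: (W_spec F).
Qed.

Theorem theorem4p11 (L : signature) (T : theory L) :
  strict T -> (pos_model_complete T <-> geom_complete T).
Proof.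
move=> strict_T; split; first exact: pos_model_complete_geom_complete.
exact: geom_complete_pos_model_complete.
Qed.
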